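(* If a connected graph $G$ has a GS ordering whose $\mathcal{F}$-tree has at most $k$ leaves, then the pathwidth of $G$ is at most $k$. Moreover, this bound is tight: for every $k\ge 1$ there is a graph (e.g. the complete graph $K_{k+1}$) that has a GS ordering whose $\mathcal{F}$-tree has exactly $k$ leaves and whose pathwidth equals $k$.
   Context: All graphs are finite, simple, undirected, connected and non-empty. A GS ordering of $G$ is an ordering $(v_1,\dots,v_n)$ of $V(G)$ such that every $v_i$ with $i>1$ has a neighbor among $v_1,\dots,v_{i-1}$. Its $\mathcal{F}$-tree is the spanning tree rooted at $v_1$ in which the parent of $v_i$ ($i>1$) is its leftmost neighbor in the ordering. A leaf is a non-root vertex without children (the root is never a leaf). *)

From mathcomp Require Import all_boot.
Set Implicit Arguments. Unset Strict Implicit. Unset Printing Implicit Defensive.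

Definition simple_graph (T : finType) (e : rel T) : Prop :=
  symmetric e /\ irreflexive e.

Definition connected_graph (T : finType) (e : rel T) : Prop :=
  0 < #|T| /\ forall x y : T, connect e x y.

(* An ordering (v_1,...,v_n) of V(G) is a duplicate-free sequence containing
   every vertex; the position of x is [index x s] (0-based). *)
Definition vertex_ordering (T : finType) (s : seq T) : Prop :=
  uniq s /\ forall x : T, x \in s.

Definition GS_ordering (T : finType) (e : rel T) (s : seq T) : Prop :=
  vertex_ordering s /\
  forall x : T, 0 < index x s -> exists2 y : T, e y x & index y s < index x s.

Definition Ftree_parent (T : finType) (e : rel T) (s : seq T) (u v : T) : bool :=
  [&& 0 < index v s, e u v & [forall w, e w v ==> (index u s <= index w s)]].

Definition Ftree_leaf (T : finType) (e : rel T) (s : seq T) (x : T) : bool :=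
  (0 < index x s) && ~~ [exists y, Ftree_parent e s x y].

Definition Ftree_leaves (T : finType) (e : rel T) (s : seq T) : {set T} :=
  [set x | Ftree_leaf e s x].

Definition path_decomposition (T : finType) (e : rel T) (bs : seq {set T}) : Prop :=
  [/\ forall x : T, exists2 B, B \in bs & x \in B,
      forall x y : T, e x y -> exists2 B, B \in bs & (x \in B) && (y \in B)
    & forall (x : T) (i j l : nat), i <= j -> j <= l -> l < size bs ->
        x \in nth set0 bs i -> x \in nth set0 bs l -> x \in nth set0 bs j].

(* width of a decomposition = (max bag size) - 1; pathwidth <= k iff some
   path decomposition has all bags of size at most k+1. *)
Definition pathwidth_le (T : finType) (e : rel T) (k : nat) : Prop :=
  exists2 bs : seq {set T}, path_decomposition e bs & forall B : {set T}, B \in bs -> #|B| <= k.+1.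

Definition pathwidth_eq (T : finType) (e : rel T) (k : nat) : Prop :=
  pathwidth_le e k /\ (0 < k -> ~ pathwidth_le e k.-1).

From mathcomp Require Import all_boot zify.
Set Implicit Arguments. Unset Strict Implicit. Unset Printing Implicit Defensive.

(* Put one bag at each position [a] of the GS ordering: the vertex at [a]
   together with every [u] whose F-tree parent lies at or before [a] while [u]
   itself lies after [a].  A vertex then occupies the consecutive bags from its
   parent's position to its own, and an edge [xy] with [x] first lies in the
   bag of [x], because the parent of [y] is its leftmost neighbour.  The
   vertices [u] counted at [a] form an antichain of the F-tree (a proper
   ancestor of [u] lies at or before the parent of [u]), so picking a leaf below
   each of them is injective and every bag has at most (#leaves + 1) vertices.
   For tightness, the F-tree of K_(k+1) is a star with k leaves, while by the
   Helly property of intervals some bag of any path decomposition contains the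
   whole clique. *)

Section GSBags.
Variables (T : finType) (e : rel T) (s : seq T).
Hypotheses (s_uniq : uniq s) (s_all : forall x, x \in s).
Hypothesis s_GS : forall x, 0 < index x s -> exists2 y, e y x & index y s < index x s.

Local Notation pos x := (index x s).

Lemma pos_lt_size x : pos x < size s. Proof. by rewrite index_mem. Qed.

Lemma pos_inj : injective (index^~ s).
Proof. by move=> x y; apply: index_inj. Qed.

Lemma pos_nth x0 i : i < size s -> pos (nth x0 s i) = i.
Proof. by move=> lt_i; rewrite index_uniq. Qed.

(* The minimum with [pos x] only matters for the root, which has no earlier
   neighbour and is thus made its own parent. *)
Definition parent_pos x := minn (find (e^~ x) s) (pos x).
Definition parent x := nth x s (parent_pos x).

Lemma parent_pos_le x : parent_pos x <= pos x. Proof. exact: geq_minr. Qed.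

Lemma pos_parent x : pos (parent x) = parent_pos x.
Proof. by rewrite pos_nth // (leq_ltn_trans (parent_pos_le x) (pos_lt_size x)). Qed.

Lemma find_neighbour_le u x : e u x -> find (e^~ x) s <= pos u.
Proof.
move=> eux; rewrite leqNgt; apply/negP => lt_u.
by have := before_find u lt_u; rewrite /= nth_index ?eux.
Qed.

Lemma parent_pos_min u x : e u x -> parent_pos x <= pos u.
Proof. by move=> eux; rewrite geq_min find_neighbour_le. Qed.

Lemma find_neighbour_lt x : 0 < pos x -> find (e^~ x) s < pos x.
Proof.
move=> x_nonroot; have [y eyx lt_yx] := s_GS x_nonroot.
exact: leq_ltn_trans (find_neighbour_le eyx) lt_yx.
Qed.

Lemma parent_posE x : 0 < pos x -> parent_pos x = find (e^~ x) s.
Proof. by move/find_neighbour_lt/ltnW/minn_idPl. Qed.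

Lemma parent_pos_lt x : 0 < pos x -> parent_pos x < pos x.
Proof. by move=> x_nonroot; rewrite parent_posE // find_neighbour_lt. Qed.

Lemma parent_edge x : 0 < pos x -> e (parent x) x.
Proof.
move=> x_nonroot; have [y eyx lt_yx] := s_GS x_nonroot.
rewrite /parent parent_posE //; apply: (nth_find x (a := e^~ x)).
by apply/hasP; exists y.
Qed.

Lemma Ftree_parent_eq u x : Ftree_parent e s u x -> parent x = u.
Proof.
case/and3P=> x_nonroot eux /forallP leftmost; apply: pos_inj.
rewrite pos_parent; apply/eqP; rewrite eqn_leq parent_pos_min //=.
by have := leftmost (parent x); rewrite parent_edge // pos_parent.
Qed.

Lemma pos_iter_parent m x : pos (iter m parent x) <= pos x.
Proof.
elim: m => // m IHm; rewrite iterS pos_parent.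
exact: leq_trans (parent_pos_le _) IHm.
Qed.

Lemma exists_leaf_below u : 0 < pos u ->
  exists2 l, Ftree_leaf e s l & fconnect parent l u.
Proof.
have [n] := ubnP (size s - pos u); elim: n => // n IHn in u *.
move=> lt_n u_nonroot.
have [/existsP[v uv] | no_child] := boolP [exists v, Ftree_parent e s u v].
  have v_nonroot : 0 < pos v by case/and3P: uv.
  have lt_uv : pos u < pos v.
    by rewrite -(Ftree_parent_eq uv) pos_parent parent_pos_lt.
  have [|l l_leaf lv] := IHn v _ v_nonroot; first by have := pos_lt_size v; lia.
  exists l => //; apply: connect_trans lv _.
  by rewrite -(Ftree_parent_eq uv) fconnect1.
by exists u; rewrite // /Ftree_leaf u_nonroot no_child.
Qed.

Definition leaf_below u := odflt u [pick l | Ftree_leaf e s l && fconnect parent l u].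

Lemma leaf_belowP u : 0 < pos u ->
  Ftree_leaf e s (leaf_below u) /\ fconnect parent (leaf_below u) u.
Proof.
move=> u_nonroot; rewrite /leaf_below; case: pickP => [l /andP[] //|none].
have [l l_leaf lu] := exists_leaf_below u_nonroot.
by have := none l; rewrite l_leaf lu.
Qed.

Definition crossing a := [set u | parent_pos u <= a < pos u].

Lemma crossing_nonroot a u : u \in crossing a -> 0 < pos u.
Proof. by rewrite inE; lia. Qed.

Lemma crossing_iter_parent a m u :
  u \in crossing a -> iter m parent u \in crossing a -> iter m parent u = u.
Proof.
case: m => // m; rewrite !inE iterSr => /andP[le_u _] /andP[_ lt_v].
by have := pos_iter_parent m (parent u); rewrite pos_parent; lia.
Qed.

Lemma crossing_common_leaf a l u1 u2 : u1 \in crossing a -> u2 \in crossing a ->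
  fconnect parent l u1 -> fconnect parent l u2 -> u1 = u2.
Proof.
move=> + + /iter_findex + /iter_findex.
set m1 := findex _ l u1; set m2 := findex _ l u2.
wlog le_m : u1 u2 m1 m2 / m1 <= m2.
  move=> wl; case: (leqP m1 m2) => [|/ltnW] /wl wl' *; first exact: wl'.
  by symmetry; apply: wl'.
move=> u1a u2a l_u1 l_u2.
have u2E : u2 = iter (m2 - m1) parent u1 by rewrite -l_u2 -l_u1 -iterD subnK.
by rewrite u2E (crossing_iter_parent u1a) // -u2E.
Qed.

Lemma card_crossing a : #|crossing a| <= #|Ftree_leaves e s|.
Proof.
have leaf_below_inj : {in crossing a &, injective leaf_below}.
  move=> u1 u2 u1a u2a same_leaf; apply: (crossing_common_leaf u1a u2a).
    exact: (leaf_belowP (crossing_nonroot u1a)).2.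
  by rewrite same_leaf; exact: (leaf_belowP (crossing_nonroot u2a)).2.
rewrite -(card_in_imset leaf_below_inj); apply/subset_leq_card/subsetP.
move=> _ /imsetP[u ua ->]; rewrite inE.
by case: (leaf_belowP (crossing_nonroot ua)).
Qed.

Definition bag a := [set u | parent_pos u <= a <= pos u].

Lemma card_bag a : #|bag a| <= #|Ftree_leaves e s|.+1.
Proof.
have bag_sub : bag a \subset [set u | pos u == a] :|: crossing a.
  by apply/subsetP => u; rewrite !inE; lia.
apply: leq_trans (subset_leq_card bag_sub) _; rewrite cardsU -add1n.
apply: leq_trans (leq_subr _ _) (leq_add _ (card_crossing a)).
apply/card_le1_eqP => x y; rewrite !inE => /eqP pos_x /eqP pos_y.
by apply: pos_inj; rewrite pos_x.
Qed.

Definition GS_bags := [seq bag a | a <- iota 0 (size s)].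

Lemma bag_pos_in x : bag (pos x) \in GS_bags.
Proof. by rewrite map_f // mem_iota pos_lt_size. Qed.

Lemma bag_edge x y :
  e x y -> pos x <= pos y -> (x \in bag (pos x)) && (y \in bag (pos x)).
Proof. by move=> exy le_xy; rewrite !inE parent_pos_le leqnn parent_pos_min. Qed.

Lemma GS_bags_decomposition : symmetric e -> path_decomposition e GS_bags.
Proof.
move=> e_sym; split.
- by move=> x; exists (bag (pos x)); rewrite ?bag_pos_in // inE parent_pos_le leqnn.
- move=> x y exy; have [le_xy | /ltnW le_yx] := leqP (pos x) (pos y).
    by exists (bag (pos x)); rewrite ?bag_pos_in ?bag_edge.
  by exists (bag (pos y)); rewrite ?bag_pos_in // andbC bag_edge // e_sym.
- move=> x i j l le_ij le_jl; rewrite size_map size_iota => lt_l.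
  by rewrite !(nth_map 0) ?size_iota ?nth_iota ?inE; lia.
Qed.

Lemma pathwidth_le_leaves : symmetric e -> pathwidth_le e #|Ftree_leaves e s|.
Proof.
move=> e_sym; exists GS_bags; first exact: GS_bags_decomposition.
by move=> _ /mapP[a _ ->]; apply: card_bag.
Qed.

End GSBags.

Lemma pathwidth_leW (T : finType) (e : rel T) m n :
  m <= n -> pathwidth_le e m -> pathwidth_le e n.
Proof.
by move=> le_mn [bs bs_dec bs_small]; exists bs => // B /bs_small /leq_trans; apply.
Qed.

Lemma pathwidth_le_card (T : finType) (e : rel T) : pathwidth_le e #|T|.-1.
Proof.
exists [:: setT]; last by move=> B; rewrite inE => /eqP ->; rewrite cardsT leqSpred.
split=> [x | x y _ | x [|i] [|j] [|l] //=]; by exists setT; rewrite ?inE.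
Qed.

Lemma clique_in_bag (T : finType) (e : rel T) (bs : seq {set T}) (A : {set T}) x0 :
  path_decomposition e bs -> x0 \in A -> {in A &, forall x y, x != y -> e x y} ->
  exists2 B, B \in bs & A \subset B.
Proof.
case=> cover edges contiguous x0A A_clique.
pose first x := find (fun B : {set T} => x \in B) bs.
have first_in x : first x < size bs /\ x \in nth set0 bs (first x).
  have [B Bbs xB] := cover x; have has_x : has (fun B : {set T} => x \in B) bs.
    by apply/hasP; exists B.
  by rewrite -has_find; split => //; apply: (nth_find set0 has_x).
have first_min x j : x \in nth set0 bs j -> first x <= j.
  by move=> xj; rewrite leqNgt; apply/negP => /(before_find set0); rewrite xj.
case: (arg_maxnP first x0A) => z zA z_max.
exists (nth set0 bs (first z)); first by rewrite mem_nth; case: (first_in z).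
apply/subsetP => y yA; have [-> | yz] := eqVneq y z; first by case: (first_in z).
have [B Bbs /andP[yB zB]] := edges _ _ (A_clique _ _ yA zA yz).
have nth_B : nth set0 bs (index B bs) = B by rewrite nth_index.
apply: (contiguous y (first y) _ (index B bs)); rewrite ?index_mem ?nth_B //.
- exact: z_max.
- by apply: first_min; rewrite nth_B.
- by case: (first_in y).
Qed.

Lemma clique_pathwidth (T : finType) (e : rel T) (A : {set T}) n :
  {in A &, forall x y, x != y -> e x y} -> pathwidth_le e n -> #|A| <= n.+1.
Proof.
move=> A_clique [bs bs_dec bs_small]; have [-> | [x0 x0A]] := set_0Vmem A.
  by rewrite cards0.
have [B Bbs AB] := clique_in_bag bs_dec x0A A_clique.
exact: leq_trans (subset_leq_card AB) (bs_small B Bbs).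
Qed.

Lemma index_eq0_nth0 (T : eqType) (s : seq T) x x0 :
  x \in s -> (index x s == 0) = (x == nth x0 s 0).
Proof. by case: s => //= y s _; case: (eqVneq x y). Qed.

Section CompleteGraph.
Variable T : finType.

Definition complete_rel : rel T := fun x y => x != y.

Lemma complete_simple : simple_graph complete_rel.
Proof. by split=> [x y | x]; rewrite /complete_rel 1?eq_sym ?eqxx. Qed.

Lemma complete_connected : 0 < #|T| -> connected_graph complete_rel.
Proof.
split=> // x y; have [-> | xy] := eqVneq x y; first exact: connect0.
exact: connect1.
Qed.

Lemma complete_pathwidth : pathwidth_eq complete_rel #|T|.-1.
Proof.
split=> [|T_gt1 pw]; first exact: pathwidth_le_card.
have := clique_pathwidth (A := setT) (fun x y _ _ => id) pw.
by rewrite cardsT; lia.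
Qed.

Variable s : seq T.
Hypothesis s_ord : vertex_ordering s.

Lemma index_eq0 x x0 : (index x s == 0) = (x == nth x0 s 0).
Proof. exact: index_eq0_nth0 (s_ord.2 x). Qed.

Lemma index_nth0 x0 : index (nth x0 s 0) s = 0.
Proof. by apply/eqP; rewrite (index_eq0 _ x0). Qed.

Lemma complete_GS : GS_ordering complete_rel s.
Proof.
split=> // x x_nonroot; exists (nth x s 0); rewrite ?index_nth0 //.
by apply: contraTneq x_nonroot => <-; rewrite index_nth0.
Qed.

Lemma complete_Ftree_leaves x0 : Ftree_leaves complete_rel s = [set~ nth x0 s 0].
Proof.
apply/setP => x; rewrite !inE /Ftree_leaf lt0n (index_eq0 _ x0).
case: eqVneq => //= x_nonroot.
apply/existsP => -[y /and3P[y_nonroot _ /forallP leftmost]].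
have := leftmost (nth x0 s 0).
rewrite /complete_rel eq_sym -(index_eq0 _ x0) -lt0n y_nonroot.
by rewrite index_nth0 leqn0 (index_eq0 _ x0) (negbTE x_nonroot).
Qed.
End CompleteGraph.

Theorem lemma3p8 :
  (forall (T : finType) (e : rel T) (s : seq T) (k : nat),
      simple_graph e -> connected_graph e -> GS_ordering e s ->
      #|Ftree_leaves e s| <= k -> pathwidth_le e k)
  /\
  (forall k : nat, 1 <= k ->
     exists (T : finType) (e : rel T) (s : seq T),
       [/\ simple_graph e, connected_graph e, GS_ordering e s,
           #|Ftree_leaves e s| = k & pathwidth_eq e k]).
Proof.
split=> [T e s k [e_sym _] _ [[s_uniq s_all] s_GS] le_k | k k_gt0].
  exact: pathwidth_leW le_k (pathwidth_le_leaves s_uniq s_all s_GS e_sym).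
exists 'I_k.+1, (@complete_rel _), (enum 'I_k.+1).
have T_ord : vertex_ordering (enum 'I_k.+1) by split=> [|x]; rewrite ?enum_uniq ?mem_enum.
split; [exact: complete_simple | | exact: complete_GS | |].
- by apply: complete_connected; rewrite card_ord.
- by rewrite (complete_Ftree_leaves T_ord ord0) cardsC1 card_ord.
- by have := @complete_pathwidth 'I_k.+1; rewrite card_ord.
Qed.
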